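(* Let $(A,*,\{\cdot,\cdot,\cdot\})$ be a pre-Lie-Yamaguti algebra. Then for all $x,y,z,w,t\in A$: $$\{[x,y]_C,z,w\}_D+\{[y,z]_C,x,w\}_D+\{[z,x]_C,y,w\}_D=0,$$ and $$\{x,y,\{z,w,t\}_D\}_D-\{\{x,y,z\}_D,w,t\}_D-\{\{x,y,z\},w,t\}_D+\{\{y,x,z\},w,t\}_D-\{z,\{x,y,w\}_D,t\}_D-\{z,\{x,y,w\},t\}_D+\{z,\{y,x,w\},t\}_D-\{z,w,\{x,y,t\}_D\}_D=0.$$
   Context: All vector spaces are over a field of characteristic $0$. A pre-Lie-Yamaguti algebra is a vector space $A$ with a bilinear operation $*$ and a trilinear operation $\{\cdot,\cdot,\cdot\}$ such that, writing $[x,y]_C=x*y-y*x$, $(x,y,z)=(x*y)*z-x*(y*z)$ and $\{x,y,z\}_D=\{z,y,x\}-\{z,x,y\}+(y,x,z)-(x,y,z)$, for all $x,y,z,w,t\in A$: (P1) $\{z,[x,y]_C,w\}-\{y*z,x,w\}+\{x*z,y,w\}=0$; (P2) $\{x,y,[z,w]_C\}=z*\{x,y,w\}-w*\{x,y,z\}$; (P3) $\{\{x,y,z\},w,t\}-\{\{x,y,w\},z,t\}-\{x,y,\{z,w,t\}_D\}-\{x,y,\{z,w,t\}\}+\{x,y,\{w,z,t\}\}+\{z,w,\{x,y,t\}\}_D=0$; (P4) $\{z,\{x,y,w\}_D,t\}+\{z,\{x,y,w\},t\}-\{z,\{y,x,w\},t\}+\{z,w,\{x,y,t\}_D\}+\{z,w,\{x,y,t\}\}-\{z,w,\{y,x,t\}\}=\{x,y,\{z,w,t\}\}_D-\{\{x,y,z\}_D,w,t\}$;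 (P5) $\{x,y,z\}_D*w+\{x,y,z\}*w-\{y,x,z\}*w=\{x,y,z*w\}_D-z*\{x,y,w\}_D$. *)

From HB Require Import structures.
From mathcomp Require Import all_boot all_order all_algebra.
Set Implicit Arguments. Unset Strict Implicit. Unset Printing Implicit Defensive.
Import GRing.Theory.
Local Open Scope ring_scope.

Section PreLY.
Variables (F : fieldType) (A : lmodType F).
Variables (mul : A -> A -> A) (tri : A -> A -> A -> A).

Definition commC (x y : A) : A := mul x y - mul y x.
Definition assoc (x y z : A) : A := mul (mul x y) z - mul x (mul y z).
Definition triD (x y z : A) : A :=
  tri z y x - tri z x y + assoc y x z - assoc x y z.

Definition bilinear_op : Prop :=
  (forall (a : F) (x x' y : A), mul (a *: x + x') y = a *: mul x y + mul x' y) /\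
  (forall (a : F) (x y y' : A), mul x (a *: y + y') = a *: mul x y + mul x y').

Definition trilinear_op : Prop :=
  (forall (a : F) (x x' y z : A), tri (a *: x + x') y z = a *: tri x y z + tri x' y z) /\
  (forall (a : F) (x y y' z : A), tri x (a *: y + y') z = a *: tri x y z + tri x y' z) /\
  (forall (a : F) (x y z z' : A), tri x y (a *: z + z') = a *: tri x y z + tri x y z').

Definition is_preLieYamaguti : Prop :=
  bilinear_op /\ trilinear_op /\
  (forall x y z w : A,
      tri z (commC x y) w - tri (mul y z) x w + tri (mul x z) y w = 0) /\
  (forall x y z w : A,
      tri x y (commC z w) = mul z (tri x y w) - mul w (tri x y z)) /\
  (forall x y z w t : A,
      tri (tri x y z) w t - tri (tri x y w) z t - tri x y (triD z w t)
      - tri x y (tri z w t) + tri x y (tri w z t) + triD z w (tri x y t) = 0) /\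
  (forall x y z w t : A,
      tri z (triD x y w) t + tri z (tri x y w) t - tri z (tri y x w) t
      + tri z w (triD x y t) + tri z w (tri x y t) - tri z w (tri y x t)
      = triD x y (tri z w t) - tri (triD x y z) w t) /\
  (forall x y z w : A,
      mul (triD x y z) w + mul (tri x y z) w - mul (tri y x z) w
      = triD x y (mul z w) - mul z (triD x y w)).

End PreLY.

From Pilot Require Import Defs.
From HB Require Import structures.
From mathcomp Require Import all_boot all_order all_algebra.
Import GRing.Theory.
Set Implicit Arguments.
Unset Strict Implicit.
Unset Printing Implicit Defensive.

Local Open Scope ring_scope.

(* Expanded by multilinearity, the left-hand side of each identity is an
   integer combination of instances of the axioms: of (P1), (P2) and (P5) for
   the cyclic identity, and of (P2), (P4) and (P5), partly multiplied on either
   side, for the second one.  Once the combination is written down, checking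
   it is a normalization in the additive group of A, done by reflection. *)

Inductive zexpr := ZVar of nat | ZZero | ZAdd of zexpr & zexpr | ZOpp of zexpr.

Section ZmodReflection.
Variable V : zmodType.

Fixpoint zeval (env : seq V) (e : zexpr) : V :=
  match e with
  | ZVar n => nth 0 env n
  | ZZero => 0
  | ZAdd e1 e2 => zeval env e1 + zeval env e2
  | ZOpp e1 => - zeval env e1
  end.

Fixpoint lin_comb (env : seq V) (c : seq int) : V :=
  match env, c with
  | v :: env', k :: c' => v *~ k + lin_comb env' c'
  | _, _ => 0
  end.

Fixpoint add_coefs (c d : seq int) : seq int :=
  match c, d with
  | [::], _ => d
  | _, [::] => c
  | a :: c', b :: d' => (a + b) :: add_coefs c' d'
  end.

Definition opp_coefs (c : seq int) : seq int := map -%R c.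

Fixpoint coefs (e : zexpr) : seq int :=
  match e with
  | ZVar n => ncons n 0 [:: 1]
  | ZZero => [::]
  | ZAdd e1 e2 => add_coefs (coefs e1) (coefs e2)
  | ZOpp e1 => opp_coefs (coefs e1)
  end.

Lemma lin_comb_nil env : lin_comb env [::] = 0.
Proof. by case: env. Qed.

Lemma lin_comb_add env c d :
  lin_comb env (add_coefs c d) = lin_comb env c + lin_comb env d.
Proof.
elim: env c d => [|v env IH] [|a c] [|b d] //=; rewrite ?lin_comb_nil ?addr0 ?add0r //.
by rewrite IH mulrzDr addrACA.
Qed.

Lemma lin_comb_opp env c : lin_comb env (opp_coefs c) = - lin_comb env c.
Proof.
elim: env c => [|v env IH] [|a c] //=; rewrite ?oppr0 //.
by rewrite IH mulrNz opprD.
Qed.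

Lemma lin_comb_var env n : lin_comb env (ncons n 0 [:: 1]) = nth 0 env n.
Proof.
elim: env n => [|v env IH] [|n] //=; first by rewrite lin_comb_nil addr0.
by rewrite IH mulr0z add0r.
Qed.

Lemma lin_comb0 env c : all (pred1 0) c -> lin_comb env c = 0.
Proof.
elim: env c => [|v env IH] [|a c] //= /andP[/eqP -> /IH ->].
by rewrite mulr0z addr0.
Qed.

Lemma zeval_coefs env e : zeval env e = lin_comb env (coefs e).
Proof.
elim: e => [n||e1 IH1 e2 IH2|e1 IH1] /=.
- by rewrite lin_comb_var.
- by rewrite lin_comb_nil.
- by rewrite lin_comb_add IH1 IH2.
- by rewrite lin_comb_opp IH1.
Qed.

Lemma zeval_eq env e1 e2 :
  all (pred1 0) (add_coefs (coefs e1) (opp_coefs (coefs e2))) ->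
  zeval env e1 = zeval env e2.
Proof.
move=> c0; apply/eqP; rewrite -subr_eq0 !zeval_coefs.
by rewrite -lin_comb_opp -lin_comb_add lin_comb0.
Qed.

End ZmodReflection.

Ltac zexpr_index x l :=
  lazymatch l with
  | x :: _ => constr:(O)
  | _ :: ?l' => let n := zexpr_index x l' in constr:(S n)
  end.

Ltac zexpr_atoms t l :=
  lazymatch t with
  | @GRing.add _ ?a ?b => let l' := zexpr_atoms a l in zexpr_atoms b l'
  | @GRing.opp _ ?a => zexpr_atoms a l
  | @GRing.zero _ => l
  | _ => lazymatch l with
         | context [t :: _] => l
         | _ => constr:(t :: l)
         end
  end.

Ltac reify_zexpr t l :=
  lazymatch t with
  | @GRing.add _ ?a ?b =>
      let ra := reify_zexpr a l in let rb := reify_zexpr b l in constr:(ZAdd ra rb)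
  | @GRing.opp _ ?a => let ra := reify_zexpr a l in constr:(ZOpp ra)
  | @GRing.zero _ => constr:(ZZero)
  | _ => let n := zexpr_index t l in constr:(ZVar n)
  end.

(* Proves an equation in a zmodType that holds formally, treating every
   subterm not built from +, - and 0 as an atom. *)
Ltac abel :=
  lazymatch goal with
  | |- @eq ?T ?a ?b =>
    let l := zexpr_atoms a (@nil T) in
    let l := zexpr_atoms b l in
    let ra := reify_zexpr a l in
    let rb := reify_zexpr b l in
    change (zeval l ra = zeval l rb); apply: zeval_eq; vm_compute; reflexivity
  end.

Lemma linear_forD (R : pzRingType) (U V : lmodType R) (f : U -> V) :
  linear f -> {morph f : x y / x + y}.
Proof. by move=> /GRing.semilinear_linear[]. Qed.

Lemma linear_forN (R : pzRingType) (U V : lmodType R) (f : U -> V) :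
  linear f -> {morph f : x / - x}.
Proof.
by move=> /GRing.semilinear_linear[Zf _] x; rewrite -[- x]scaleN1r Zf; apply: scaleN1r.
Qed.

Lemma linear_for0 (R : pzRingType) (U V : lmodType R) (f : U -> V) :
  linear f -> f 0 = 0.
Proof.
by move=> /GRing.semilinear_linear[Zf _]; rewrite -(scale0r (0 : U)) Zf; apply: scale0r.
Qed.

Section PreLieYamaguti.
Variables (F : fieldType) (A : lmodType F).
Variables (mul : A -> A -> A) (tri : A -> A -> A -> A).

Local Notation triD := (triD mul tri).
Local Notation commC := (commC mul).

Definition P1_defect (x y z w : A) : A :=
  tri z (commC x y) w - tri (mul y z) x w + tri (mul x z) y w.
Definition P2_defect (x y z w : A) : A :=
  tri x y (commC z w) - (mul z (tri x y w) - mul w (tri x y z)).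
Definition P4_defect (x y z w t : A) : A :=
  tri z (triD x y w) t + tri z (tri x y w) t - tri z (tri y x w) t
  + tri z w (triD x y t) + tri z w (tri x y t) - tri z w (tri y x t)
  - (triD x y (tri z w t) - tri (triD x y z) w t).
Definition P5_defect (x y z w : A) : A :=
  mul (triD x y z) w + mul (tri x y z) w - mul (tri y x z) w
  - (triD x y (mul z w) - mul z (triD x y w)).

Section Multilinear.
Hypotheses (mulL : bilinear_op mul) (triL : trilinear_op tri).

Let mul1L z : linear (mul^~ z) := fun a x x' => mulL.1 a x x' z.
Let mul2L x : linear (mul x) := mulL.2^~ x.

Lemma mulDl x y z : mul (x + y) z = mul x z + mul y z.
Proof. exact: (linear_forD (mul1L z) x y). Qed.
Lemma mulDr x y z : mul z (x + y) = mul z x + mul z y.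
Proof. exact: (linear_forD (mul2L z) x y). Qed.
Lemma mulNl x z : mul (- x) z = - mul x z.
Proof. exact: (linear_forN (mul1L z) x). Qed.
Lemma mulNr x z : mul z (- x) = - mul z x.
Proof. exact: (linear_forN (mul2L z) x). Qed.
Lemma mul0l z : mul 0 z = 0.
Proof. exact: (linear_for0 (mul1L z)). Qed.
Lemma mul0r z : mul z 0 = 0.
Proof. exact: (linear_for0 (mul2L z)). Qed.

Let tri1L y z : linear (fun x => tri x y z) := fun a x x' => triL.1 a x x' y z.
Let tri2L x z : linear (tri x^~ z) := fun a y y' => triL.2.1 a x y y' z.
Let tri3L x y : linear (tri x y) := fun a => triL.2.2 a x y.

Lemma triDl x x' y z : tri (x + x') y z = tri x y z + tri x' y z.
Proof. exact: (linear_forD (tri1L y z) x x'). Qed.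
Lemma triDm x y y' z : tri x (y + y') z = tri x y z + tri x y' z.
Proof. exact: (linear_forD (tri2L x z) y y'). Qed.
Lemma triDr x y z z' : tri x y (z + z') = tri x y z + tri x y z'.
Proof. exact: (linear_forD (tri3L x y) z z'). Qed.
Lemma triNl x y z : tri (- x) y z = - tri x y z.
Proof. exact: (linear_forN (tri1L y z) x). Qed.
Lemma triNm x y z : tri x (- y) z = - tri x y z.
Proof. exact: (linear_forN (tri2L x z) y). Qed.
Lemma triNr x y z : tri x y (- z) = - tri x y z.
Proof. exact: (linear_forN (tri3L x y) z). Qed.

Ltac expand :=
  rewrite /P1_defect /P2_defect /P4_defect /P5_defect /Defs.triD /assoc /Defs.commC;
  rewrite ?(mulDl, mulDr, mulNl, mulNr, triDl, triDm, triDr, triNl, triNm, triNr).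

Lemma triD_commC_cyclic_expand x y z w :
  triD (commC x y) z w + triD (commC y z) x w + triD (commC z x) y w =
    - P1_defect x y w z - P1_defect y z w x + P1_defect x z w y
    + P2_defect w z x y - P2_defect w y x z + P2_defect w x y z
    + P5_defect x y z w + P5_defect y z x w - P5_defect x z y w.
Proof. expand; abel. Qed.

Lemma triD_leibniz_expand x y z w t :
  triD x y (triD z w t) - triD (triD x y z) w t
    - triD (tri x y z) w t + triD (tri y x z) w t
    - triD z (triD x y w) t - triD z (tri x y w) t
    + triD z (tri y x w) t - triD z w (triD x y t) =
    - mul (P2_defect x y z w) t + mul (P2_defect y x z w) t
    - P4_defect x y t w z + P4_defect x y t z w
    + mul (P5_defect x y z w) t - mul (P5_defect x y w z) t
    + mul w (P5_defect x y z t) - mul z (P5_defect x y w t)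
    - P5_defect x y (mul w z) t + P5_defect x y (mul z w) t
    - P5_defect x y z (mul w t) + P5_defect x y w (mul z t).
Proof. expand; abel. Qed.

End Multilinear.

Section Identities.
Hypothesis HA : is_preLieYamaguti mul tri.

Lemma P1_defect0 x y z w : P1_defect x y z w = 0.
Proof. by case: HA => _ [_ [P1 _]]; apply: P1. Qed.

Lemma P2_defect0 x y z w : P2_defect x y z w = 0.
Proof. by case: HA => _ [_ [_ [P2 _]]]; rewrite /P2_defect P2 subrr. Qed.

Lemma P4_defect0 x y z w t : P4_defect x y z w t = 0.
Proof. by case: HA => _ [_ [_ [_ [_ [P4 _]]]]]; rewrite /P4_defect P4 subrr. Qed.

Lemma P5_defect0 x y z w : P5_defect x y z w = 0.
Proof. by case: HA => _ [_ [_ [_ [_ [_ P5]]]]]; rewrite /P5_defect P5 subrr. Qed.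

Lemma triD_commC_cyclic x y z w :
  triD (commC x y) z w + triD (commC y z) x w + triD (commC z x) y w = 0.
Proof.
rewrite (triD_commC_cyclic_expand HA.1 HA.2.1).
by rewrite !P1_defect0 !P2_defect0 !P5_defect0 !subr0 !addr0 oppr0.
Qed.

Lemma triD_leibniz x y z w t :
  triD x y (triD z w t) - triD (triD x y z) w t
    - triD (tri x y z) w t + triD (tri y x z) w t
    - triD z (triD x y w) t - triD z (tri x y w) t
    + triD z (tri y x w) t - triD z w (triD x y t) = 0.
Proof.
rewrite (triD_leibniz_expand HA.1 HA.2.1).
rewrite !P2_defect0 !P4_defect0 !P5_defect0 !(mul0l HA.1) !(mul0r HA.1).
by rewrite !subr0 !addr0 oppr0.
Qed.

End Identities.
End PreLieYamaguti.

Theorem lemma3p8 (F : fieldType) (charF0 : [pchar F] =i pred0)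
  (A : lmodType F) (mul : A -> A -> A) (tri : A -> A -> A -> A)
  (HA : is_preLieYamaguti mul tri) (x y z w t : A) :
  triD mul tri (commC mul x y) z w + triD mul tri (commC mul y z) x w
    + triD mul tri (commC mul z x) y w = 0
  /\
  triD mul tri x y (triD mul tri z w t) - triD mul tri (triD mul tri x y z) w t
    - triD mul tri (tri x y z) w t + triD mul tri (tri y x z) w t
    - triD mul tri z (triD mul tri x y w) t - triD mul tri z (tri x y w) t
    + triD mul tri z (tri y x w) t - triD mul tri z w (triD mul tri x y t) = 0.
Proof. by split; [apply: triD_commC_cyclic | apply: triD_leibniz]. Qed.
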